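(* Let $G=(V,E)$ be a network, $s,t\in V$, and $S\in[S_{min},1]$. Run the CO-TSCMQ algorithm on $G,s,t,S$. If there exists a survivable connection from $s$ to $t$ with survivability level at least $S$, the algorithm returns a survivable connection that is an optimal solution of the CO-Constrained Survivability Min-QoS problem. Otherwise, the algorithm fails.
   Context: A network is a directed graph $G=(V,E)$, $N=|V|$, $M=|E|$. Each link $e$ has a failure probability $p_e\in(0,p_{max}]$ with $p_{max}<1$, and a positive weight $w_e$. Paths are identified with their sets of links. $P^{(s,t)}$ is the set of simple $s$–$t$ paths, and $S_{min}=(1-p_{max})^M$. A survivable connection is a pair $(\pi_1,\pi_2)\in P^{(s,t)}\times P^{(s,t)}$; the two paths may coincide. Its survivability level is $\prod_{e\in\pi_1\cap\pi_2}(1-p_e)$, equal to $1$ if $\pi_1\cap\pi_2=\emptyset$. Its CO-weight is $W_{CO}(\pi_1,\pi_2)=\sum_{e\in\pi_1\cup\pi_2}w_e$. CO-Constrained Survivability Min-QoS (CO-CSMQ) problem: find a survivable connection minimizing $W_{CO}$ subject to survivability level $\ge S$. Restricted Shortest Path (RSP) problem: given a graph in which each link has a length $l_e$ and a time $t_e$, a bound $T$, and two nodes, find a path between them minimizing $\sum l_e$ subject to $\sum t_e\le T$. CO-TSCMQ algorithm: 1. Build a multigraph $\tilde G$ on node set $V$. For each link $e=(u,v)\in E$, add a ''simple link'' $u\to v$ with weight $w_e$ and survivability cost $-\ln(1-p_e)$. 2. For each ordered pair of nodes $(u,v)$ for which a pair of link-disjoint $u$–$v$ paths exists, compute a pair of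 link-disjoint $u$–$v$ paths of minimum total weight (an edge-disjoint shortest pair, EDSPoP). Add a ''disjoint link'' $u\to v$ with weight equal to that total weight and survivability cost $0$. 3. Solve exactly the RSP instance on $\tilde G$ from $s$ to $t$ that minimizes total weight subject to total survivability cost $\le -\ln S$. If no feasible path exists, fail. 4. Otherwise, from the returned path $\tilde\pi$ build $(\pi_1,\pi_2)$. Each simple link contributes its original link to both $\pi_1$ and $\pi_2$. Each disjoint link contributes one path of its EDSPoP to $\pi_1$ and the other to $\pi_2$. Return $(\pi_1,\pi_2)$. *)

From HB Require Import structures.
From mathcomp Require Import all_boot all_order all_algebra.
From mathcomp Require Import reals exp.
Set Implicit Arguments. Unset Strict Implicit. Unset Printing Implicit Defensive.
Import Order.TTheory GRing.Theory Num.Theory.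
Local Open Scope ring_scope.

Section Network.
Variables (R : realType) (V : finType) (adj : rel V).

Definition link := (V * V)%type.
Definition links_of : {set link} := [set e : link | adj e.1 e.2].
Definition nlinks : nat := #|links_of|.

Definition spath (s t : V) (q : seq V) : bool :=
  match q with
  | [::] => false
  | x :: r => [&& x == s, last x r == t, path adj x r & uniq (x :: r)]
  end.

Definition links_seq (q : seq V) : {set link} :=
  [set e : link | e \in zip q (behead q)].

Definition is_stpath (s t : V) (A : {set link}) : Prop :=
  exists q, spath s t q /\ A = links_seq q.

Variables (p w : link -> R).

Definition wt (A : {set link}) : R := \sum_(e in A) w e.
Definition surv (A B : {set link}) : R := \prod_(e in A :&: B) (1 - p e).
Definition WCO (A B : {set link}) : R := \sum_(e in A :|: B) w e.

Definition feasible_conn (s t : V) (S : R) (A B : {set link}) : Prop :=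
  is_stpath s t A /\ is_stpath s t B /\ S <= surv A B.

Definition dpair_exists (u v : V) : Prop :=
  exists A B, is_stpath u v A /\ is_stpath u v B /\ A :&: B = set0.

Definition EDSPoP_spec (D : V -> V -> {set link} * {set link}) : Prop :=
  forall u v, dpair_exists u v ->
    [/\ is_stpath u v (D u v).1, is_stpath u v (D u v).2,
        (D u v).1 :&: (D u v).2 = set0 &
        forall A B, is_stpath u v A -> is_stpath u v B -> A :&: B = set0 ->
          wt (D u v).1 + wt (D u v).2 <= wt A + wt B].

(* Links of the multigraph ~G: inl e = simple link e, inr (u,v) = disjoint link u -> v. *)
Definition tlink := (link + link)%type.
Definition tsrc (l : tlink) : V := match l with inl e => e.1 | inr e => e.1 end.
Definition tdst (l : tlink) : V := match l with inl e => e.2 | inr e => e.2 end.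
Definition tvalid (l : tlink) : Prop :=
  match l with inl e => adj e.1 e.2 | inr e => dpair_exists e.1 e.2 end.

Fixpoint twalk (x : V) (ls : seq tlink) (t : V) : Prop :=
  match ls with
  | [::] => x = t
  | l :: ls' => [/\ tvalid l, tsrc l = x & twalk (tdst l) ls' t]
  end.

Definition tpath (s t : V) (ls : seq tlink) : Prop :=
  twalk s ls t /\ uniq (s :: map tdst ls).

Variable D : V -> V -> {set link} * {set link}.

Definition tweight (l : tlink) : R :=
  match l with inl e => w e | inr e => wt (D e.1 e.2).1 + wt (D e.1 e.2).2 end.
Definition tcost (l : tlink) : R :=
  match l with inl e => - ln (1 - p e) | inr _ => 0 end.

Definition tW (ls : seq tlink) : R := \sum_(l <- ls) tweight l.
Definition tC (ls : seq tlink) : R := \sum_(l <- ls) tcost l.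

Definition RSP_feasible (s t : V) (S : R) (ls : seq tlink) : Prop :=
  tpath s t ls /\ tC ls <= - ln S.
Definition RSP_optimal (s t : V) (S : R) (ls : seq tlink) : Prop :=
  RSP_feasible s t S ls /\ forall ls', RSP_feasible s t S ls' -> tW ls <= tW ls'.

(* step 4: build (pi1, pi2) from the returned path *)
Definition part1 (l : tlink) : {set link} :=
  match l with inl e => [set e] | inr e => (D e.1 e.2).1 end.
Definition part2 (l : tlink) : {set link} :=
  match l with inl e => [set e] | inr e => (D e.1 e.2).2 end.
Definition build (ls : seq tlink) : {set link} * {set link} :=
  (\bigcup_(l <- ls) part1 l, \bigcup_(l <- ls) part2 l).

End Network.

(* Two transformations relate connections and paths of ~G.  First, two s-t paths can
   be rearranged into an s-t path of ~G whose weight is at most their CO-weight and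
   whose cost is at most minus the log of their survivability level: cut both paths at
   their first shared link; if it is the same link, the two prefixes form a
   link-disjoint pair, at least as heavy as the corresponding disjoint link of ~G,
   followed by a simple link, and one recurses on the suffixes; otherwise swapping the
   tails strictly decreases the number of shared links.  Second, the links of a path of
   ~G contain two s-t paths sharing only its simple links (Menger's theorem for two
   paths, in the multigraph where simple links are doubled); their CO-weight is
   strictly below the weight of the ~G path unless the segments are link-disjoint and
   the concatenations built in step 4 are simple paths.  As level >= S amounts to
   cost <= -ln S, an optimal ~G path therefore yields a feasible connection that is no
   heavier than any other. *)

From mathcomp Require Import all_boot all_order all_algebra.
From mathcomp Require Import reals exp lra.
Set Implicit Arguments. Unset Strict Implicit. Unset Printing Implicit Defensive.
Import Order.TTheory GRing.Theory Num.Theory.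

Lemma disjoint_setU1 (T : finType) (x : T) (A B : {set T}) :
  [disjoint x |: A & B] = (x \notin B) && [disjoint A & B].
Proof. by rewrite -!setI_eq0 setIUl setU_eq0 setI_eq0 disjoints1. Qed.

Lemma disjoint_setUl (T : finType) (A B C : {set T}) :
  [disjoint A :|: B & C] = [disjoint A & C] && [disjoint B & C].
Proof. by rewrite -!setI_eq0 setIUl setU_eq0. Qed.

Section LinkSeq.
Variables (V : finType) (adj : rel V).
Implicit Types (x y v t : V) (r a b : seq V) (K : {set link V}).

Definition upath x t r := [/\ path adj x r, last x r = t & uniq (x :: r)].

Lemma links_seq1 x : links_seq [:: x] = set0.
Proof. by apply/setP => e; rewrite !inE. Qed.

Lemma links_seq_cons x y r :
  links_seq [:: x, y & r] = (x, y) |: links_seq (y :: r).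
Proof. by apply/setP => e; rewrite !inE. Qed.

Lemma links_seq_cat x a b :
  links_seq (x :: a ++ b) = links_seq (x :: a) :|: links_seq (last x a :: b).
Proof.
elim: a x => [|y a IH] x /=; first by rewrite links_seq1 set0U.
by rewrite links_seq_cons IH links_seq_cons setUA.
Qed.

Lemma links_seq_split x a v b :
  links_seq (x :: a ++ v :: b) =
  links_seq (x :: a) :|: ((last x a, v) |: links_seq (v :: b)).
Proof. by rewrite links_seq_cat links_seq_cons. Qed.

Lemma links_seq_prefix x a b : links_seq (x :: a) \subset links_seq (x :: a ++ b).
Proof. by rewrite links_seq_cat subsetUl. Qed.

Lemma links_seq_suffix x a v b : links_seq (v :: b) \subset links_seq (x :: a ++ v :: b).
Proof. by rewrite links_seq_split setUCA setUA subsetUr. Qed.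

Lemma mem_links_seq x r e :
  e \in links_seq (x :: r) -> (e.1 \in x :: r) && (e.2 \in x :: r).
Proof.
elim: r x => [|y r IH] x; first by rewrite links_seq1 inE.
rewrite links_seq_cons => /setU1P [-> | /IH /andP [h1 h2]].
  by rewrite /= !inE !eqxx orbT.
by rewrite inE h1 orbT inE h2 orbT.
Qed.

Lemma links_seq_adj x r e : path adj x r -> e \in links_seq (x :: r) -> adj e.1 e.2.
Proof.
elim: r x => [|y r IH] x; first by rewrite links_seq1 inE.
by rewrite links_seq_cons /= => /andP [hxy /IH hr] /setU1P [-> | /hr].
Qed.

Lemma links_seq_splitP x r e : e \in links_seq (x :: r) ->
  exists a b, r = a ++ e.2 :: b /\ last x a = e.1.
Proof.
elim: r x => [|y r IH] x; first by rewrite links_seq1 inE.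
rewrite links_seq_cons => /setU1P [-> | /IH [a [b [-> h]]]]; first by exists [::], r.
by exists (y :: a), b.
Qed.

Lemma links_seq_first x r K : links_seq (x :: r) :&: K != set0 ->
  exists a v b, [/\ r = a ++ v :: b, (last x a, v) \in K &
                    links_seq (x :: a) :&: K = set0].
Proof.
elim: r x => [|y r IH] x; first by rewrite links_seq1 set0I eqxx.
have [hxy _ | hxy] := boolP ((x, y) \in K).
  by exists [::], y, r; rewrite links_seq1 set0I.
have hxyK Z : ((x, y) |: Z) :&: K = Z :&: K.
  apply/setP => e; rewrite !inE.
  by case: (eqVneq e (x, y)) => [-> | //]; rewrite (negbTE hxy) !andbF.
rewrite links_seq_cons hxyK => /IH [a [v [b [-> hK ha]]]].
by exists (y :: a), v, b; rewrite links_seq_cons hxyK.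
Qed.

Lemma uniq_links_seq_split x a v b : uniq (x :: a ++ v :: b) ->
  [/\ (last x a, v) \notin links_seq (x :: a),
      (last x a, v) \notin links_seq (v :: b)
    & [disjoint links_seq (x :: a) & links_seq (v :: b)]].
Proof.
rewrite -cat_cons cat_uniq => /and3P [_ hd _].
have hv : v \notin x :: a.
  by apply: contra hd => hv; apply/hasP; exists v => //; apply: mem_head.
have hl : last x a \notin v :: b.
  by apply: contra hd => hl; apply/hasP; exists (last x a) => //; apply: mem_last.
split.
- by apply: contra hv => /mem_links_seq /andP [].
- by apply: contra hl => /mem_links_seq /andP [].
- rewrite -setI_eq0; apply/eqP/setP => e; rewrite in_setI in_set0; apply/negP.
  move=> /andP [/mem_links_seq /andP [h1 _] /mem_links_seq /andP [h2 _]].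
  by move/hasP: hd; apply; exists e.1.
Qed.

Lemma upath_split x t a v b : upath x t (a ++ v :: b) ->
  [/\ upath x (last x a) a, adj (last x a) v & upath v t b].
Proof.
case=> + ht; rewrite cat_path -cat_cons cat_uniq => /andP [ha /andP [hv hb]] /and3P [hua _ hub].
by move: ht; rewrite last_cat.
Qed.

Lemma upath_prefix x t a b : upath x t (a ++ b) -> upath x (last x a) a.
Proof.
by case; rewrite cat_path => /andP [ha _] _; rewrite -cat_cons cat_uniq => /and3P [].
Qed.

Lemma walk_shorten x r : path adj x r -> exists r',
  [/\ upath x (last x r) r', {subset r' <= r} &
      links_seq (x :: r') \subset links_seq (x :: r)].
Proof.
move: {2}(size r) (leqnn (size r)) => n; elim: n x r => [|n IH] x r.
  by case: r => // _ _; exists [::].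
have [xr | xnr] := boolP (x \in r).
  case/splitPr: xr => r1 r2 hsz hp.
  have hp2 : path adj x r2 by move: hp; rewrite cat_path => /and3P [_ _].
  have [|r' [h1 h2 h3]] := IH x r2 _ hp2.
    by move: hsz; rewrite size_cat /= addnS ltnS; apply: leq_trans; apply: leq_addl.
  exists r'; split.
  - by rewrite last_cat.
  - by move=> z /h2 hz; rewrite mem_cat inE hz !orbT.
  - by apply: (subset_trans h3); rewrite links_seq_split subsetU // subsetU1 ?orbT.
case: r xnr => [|y r] xnr hsz hp; first by exists [::].
have [r' [[h1 h2 h3] h4 h5]] := IH y r hsz (path_sorted hp).
exists (y :: r'); split.
- split => //; first by rewrite /= (andP hp).1.
  rewrite cons_uniq h3 andbT inE negb_or; apply/andP; split.
    by apply: contraNneq xnr => ->; apply: mem_head.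
  by apply: contra xnr => /h4 hx; rewrite inE hx orbT.
- by move=> z; rewrite !inE => /orP [-> // | /h4 ->]; rewrite orbT.
- by rewrite !links_seq_cons setUS.
Qed.

Lemma stpathP x t A :
  is_stpath adj x t A <-> exists2 r, upath x t r & A = links_seq (x :: r).
Proof.
split; first by case=> [[|y r] [] //= /and4P [/eqP -> /eqP ht hp hu] ->]; exists r.
by case=> r [hp ht hu] ->; exists (x :: r); rewrite /spath eqxx ht eqxx hp.
Qed.

Lemma upath_stpath x t r : upath x t r -> is_stpath adj x t (links_seq (x :: r)).
Proof. by move=> h; apply/stpathP; exists r. Qed.

Lemma walk_stpath x r : path adj x r ->
  exists2 A, is_stpath adj x (last x r) A & A \subset links_seq (x :: r).
Proof.
by case/walk_shorten => r' [h _ hs]; exists (links_seq (x :: r')) => //; apply: upath_stpath.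
Qed.

Lemma links_seq_cross x r (X : {set V}) : x \in X -> last x r \notin X ->
  exists2 g, g \in links_seq (x :: r) & (g.1 \in X) && (g.2 \notin X).
Proof.
elim: r x => [|y r IH] x /=; first by move=> ->.
move=> hx hl; have [hy | hy] := boolP (y \in X).
  by have [g hg hgX] := IH y hy hl; exists g; rewrite // links_seq_cons in_setU1 hg orbT.
by exists (x, y); rewrite ?links_seq_cons ?setU11 //= hx.
Qed.

End LinkSeq.

Local Open Scope ring_scope.

Section SetSums.
Variables (R : numDomainType) (T : finType).
Implicit Types (A B : {set T}) (f : T -> R).

Lemma big_setU_disj f A B : [disjoint A & B] ->
  \sum_(e in A :|: B) f e = \sum_(e in A) f e + \sum_(e in B) f e.
Proof. by move=> hAB; rewrite -bigU //; apply: eq_bigl => e; rewrite !inE. Qed.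

Lemma ler_sum_subset f A B : A \subset B -> {in B, forall e, 0 <= f e} ->
  \sum_(e in A) f e <= \sum_(e in B) f e.
Proof.
move=> hAB hf; rewrite [X in _ <= X](big_setID A) /= (setIidPr hAB) lerDl.
by apply: sumr_ge0 => e /setDP [eB _]; apply: hf.
Qed.

Lemma ltr_sum_proper f A B : A \proper B -> {in B, forall e, 0 < f e} ->
  \sum_(e in A) f e < \sum_(e in B) f e.
Proof.
case/properP => hAB [g gB gA] hf; rewrite [X in _ < X](big_setID A) /= (setIidPr hAB) ltrDl.
rewrite (big_setD1 g) /= ?inE ?gA ?gB //; apply: ltr_pwDl; first exact: hf.
by apply: sumr_ge0 => e; rewrite !inE => /and3P [_ _ eB]; apply/ltW/hf.
Qed.

Lemma setUD_subset A B : (A :|: B) :\: A \subset B.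
Proof. by apply/subsetP => e; rewrite !inE; case: (e \in A). Qed.

Lemma ler_sum_setU f A B : {in B, forall e, 0 <= f e} ->
  \sum_(e in A :|: B) f e <= \sum_(e in A) f e + \sum_(e in B) f e.
Proof.
move=> hf; rewrite (big_setID A) /= setUK lerD2l.
exact: ler_sum_subset (setUD_subset A B) hf.
Qed.

Lemma ltr_sum_setU f A B g : {in A :|: B, forall e, 0 < f e} -> g \in A :&: B ->
  \sum_(e in A :|: B) f e < \sum_(e in A) f e + \sum_(e in B) f e.
Proof.
move=> hf /setIP [gA gB]; rewrite (big_setID A) /= setUK ltrD2l.
apply: ltr_sum_proper => [|e eB]; last by apply: hf; rewrite inE eB orbT.
by apply/properP; split; [apply: setUD_subset | exists g => //; rewrite inE gA].
Qed.

End SetSums.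

Section Flow.
Variables (V L : finType) (src dst : L -> V).
Implicit Types (F : {set L}) (X : {set V}) (r : seq L).

Fixpoint lwalk x r y : bool :=
  if r is e :: r' then (src e == x) && lwalk (dst e) r' y else x == y.

Definition netout F v : int := \sum_(e in F) ((src e == v)%:Z - (dst e == v)%:Z).

Definition out_links F X := [set e in F | (src e \in X) && (dst e \notin X)].

Definition linkrel F : rel V := fun u v => [exists e in F, (src e == u) && (dst e == v)].

Lemma sum_eq_indicator X a : \sum_(v in X) ((a == v)%:Z : int) = (a \in X)%:Z.
Proof.
have [aX | aX] := boolP (a \in X); last first.
  by rewrite big1 // => v vX; case: eqP => // av; rewrite av vX in aX.
rewrite (bigD1 a) //= eqxx big1 ?addr0 // => v /andP [_ hv].
by rewrite eq_sym (negbTE hv).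
Qed.

Lemma sum_indicator F (P : pred L) : \sum_(e in F) ((P e)%:Z : int) = #|[set e in F | P e]|%:Z.
Proof.
rewrite (eq_bigr (fun e => if P e then 1 else 0)); last by move=> e _; case: (P e).
rewrite -big_mkcondr /= sumr_const natz; congr Posz.
by apply: eq_card => e; rewrite !inE.
Qed.

Lemma sum_netout_cut F X :
  \sum_(v in X) netout F v = #|out_links F X|%:Z - #|out_links F (~: X)|%:Z.
Proof.
rewrite /netout exchange_big /= -!sum_indicator -sumrB; apply: eq_bigr => e _.
rewrite sumrB !sum_eq_indicator !inE.
by case: (src e \in X); case: (dst e \in X).
Qed.

Lemma netout_setU F1 F2 v : [disjoint F1 & F2] ->
  netout (F1 :|: F2) v = netout F1 v + netout F2 v.
Proof. by move=> h; rewrite /netout big_setU_disj. Qed.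

Lemma netout_setD F1 F2 v : F2 \subset F1 ->
  netout (F1 :\: F2) v = netout F1 v - netout F2 v.
Proof. by move=> h; rewrite [netout F1 v]/netout (big_setID F2) /= (setIidPr h) addrC addrK. Qed.

Lemma netout_lwalk x r y v : lwalk x r y -> uniq r ->
  netout [set e in r] v = (x == v)%:Z - (y == v)%:Z.
Proof.
elim: r x => [|e r IH] x /=.
  by move=> /eqP -> _; rewrite /netout big_pred0 ?subrr // => z; rewrite !inE.
move=> /andP [/eqP hs hw] /andP [he hu].
have -> : [set e0 in e :: r] = e |: [set e0 in r] by apply/setP => z; rewrite !inE.
rewrite /netout big_setU1 ?inE //= -/(netout _ v) (IH _ hw hu) hs.
by rewrite addrA subrK.
Qed.

Lemma linkrel_path F x q : path (linkrel F) x q ->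
  exists r, [/\ lwalk x r (last x q), {subset r <= F} & map dst r = q].
Proof.
elim: q x => [|y q IH] x /=; first by exists [::]; split => /=.
case/andP => /existsP [e /and3P [eF /eqP hs /eqP hd]] /IH [r [h1 h2 h3]].
exists (e :: r); split => /=.
- by rewrite hs eqxx hd.
- by move=> z; rewrite inE => /orP [/eqP -> // | /h2].
- by rewrite hd h3.
Qed.

Lemma connect_lwalk F x y : connect (linkrel F) x y ->
  exists r, [/\ lwalk x r y, uniq r & {subset r <= F}].
Proof.
case/connectP => q /shortenP [q' hq' /andP [_ hu] _] ->.
have [r [h1 h2 h3]] := linkrel_path hq'.
by exists r; split => //; apply: (@map_uniq _ _ dst); rewrite h3.
Qed.

Lemma out_links_reach F x : out_links F [set v | connect (linkrel F) x v] = set0.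
Proof.
apply/setP => e; rewrite !inE; apply/negP => /andP [eF /andP [hs /negP]]; apply.
by apply: (connect_trans hs); apply: connect1; apply/existsP; exists e; rewrite eF !eqxx.
Qed.

Lemma flow_lwalk F s t (k : nat) : s != t -> (0 < k)%N ->
  (forall v, netout F v = k%:Z * ((s == v)%:Z - (t == v)%:Z)) ->
  exists r, [/\ lwalk s r t, uniq r & {subset r <= F}].
Proof.
move=> hst hk hF; apply: connect_lwalk; apply/negPn/negP => ht.
set X := [set v | connect (linkrel F) s v].
have hsum : \sum_(v in X) netout F v = k%:Z.
  rewrite (eq_bigr _ (fun v _ => hF v)) -mulr_sumr sumrB !sum_eq_indicator.
  by rewrite !inE connect0 (negbTE ht) subr0 mulr1.
move: hsum; rewrite sum_netout_cut out_links_reach cards0 sub0r => hsum.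
have : (0 < k%:Z :> int) by rewrite ltz_nat.
by rewrite -hsum oppr_gt0 ltNge le0z_nat.
Qed.

Lemma lwalk_path (adj : rel V) x r y : lwalk x r y -> {in r, forall e, adj (src e) (dst e)} ->
  [/\ path adj x (map dst r), last x (map dst r) = y &
      links_seq (x :: map dst r) \subset [set (src e, dst e) | e in r]].
Proof.
elim: r x => [|e r IH] x /=; first by move=> /eqP -> _; rewrite links_seq1 sub0set.
case/andP => /eqP hs /IH {}IH hadj.
have [|h1 h2 h3] := IH; first by move=> e' he'; apply: hadj; rewrite inE he' orbT.
split => //; first by rewrite h1 andbT -hs hadj ?mem_head.
rewrite links_seq_cons -hs subUset sub1set; apply/andP; split.
  by apply/imsetP; exists e => //; rewrite mem_head.
apply: subset_trans h3 _; apply/subsetP => g /imsetP [e' he' ->].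
by apply/imsetP; exists e' => //; rewrite inE he' orbT.
Qed.

End Flow.

Section Menger.
Variables (V L : finType) (src dst : L -> V).
Implicit Types (H F : {set L}) (Y : {set V}) (r : seq L).

(* The arc (true, e) of a residual graph traverses e forwards, (false, e) backwards. *)
Definition rsrc (a : bool * L) := if a.1 then src a.2 else dst a.2.
Definition rdst (a : bool * L) := if a.1 then dst a.2 else src a.2.
Definition residual H F : {set bool * L} :=
  [set a | if a.1 then a.2 \in H :\: F else a.2 \in F].
Definition fwd (Z : {set bool * L}) := [set e | (true, e) \in Z].
Definition bwd (Z : {set bool * L}) := [set e | (false, e) \in Z].

Lemma netout_arcs Z v :
  netout rsrc rdst Z v = netout src dst (fwd Z) v - netout src dst (bwd Z) v.
Proof.
pose g b e : int := (rsrc (b, e) == v)%:Z - (rdst (b, e) == v)%:Z.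
rewrite /netout (eq_big (fun a => predT a.1 && ((a.1, a.2) \in Z)) (fun a => g a.1 a.2)) //;
  try by case.
rewrite -(pair_big_dep predT (fun b e => (b, e) \in Z) g) big_bool /= -sumrN.
by congr (_ + _); apply: eq_big => [e | e _]; rewrite ?inE // opprB.
Qed.

Lemma lwalk_of_cuts H s t :
  (forall Y, s \in Y -> t \notin Y -> out_links src dst H Y != set0) ->
  exists r, [/\ lwalk src dst s r t, uniq r & {subset r <= H}].
Proof.
move=> hcut; apply: connect_lwalk; apply/negPn/negP => ht.
have := hcut [set v | connect (linkrel src dst H) s v].
by rewrite !inE connect0 ht out_links_reach eqxx => /(_ isT isT).
Qed.

Section Residual.
Variables (H : {set L}) (s t : V) (r : seq L).
Hypotheses (hr : lwalk src dst s r t) (hru : uniq r) (hrH : {subset r <= H}).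
Let F := [set e in r].

Lemma netout_path v : netout src dst F v = (s == v)%:Z - (t == v)%:Z.
Proof. exact: netout_lwalk. Qed.

Lemma residual_cut : ~~ connect (linkrel rsrc rdst (residual H F)) s t ->
  exists2 Y : {set V}, s \in Y /\ t \notin Y & (#|out_links src dst H Y| <= 1)%N.
Proof.
move=> ht; pose Y : {set V} := [set v | connect (linkrel rsrc rdst (residual H F)) s v].
have hY := out_links_reach rsrc rdst (residual H F) s; rewrite -/Y in hY.
have [hsY htY] : s \in Y /\ t \notin Y by rewrite !inE connect0.
clearbody Y; exists Y => //.
have arc_out a : a \in residual H F -> rsrc a \in Y -> rdst a \in Y.
  by move=> ha hs; apply/negPn/negP => hd; move/setP: hY => /(_ a); rewrite in_set ha hs hd in_set0.
have hout : out_links src dst H Y \subset out_links src dst F Y.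
  apply/subsetP => e; rewrite !inE => /and3P [eH hs hd]; rewrite hs hd !andbT.
  by apply: contraNT hd => eF; apply: (arc_out (true, e)) => //; rewrite !inE /= eF eH.
have hin : out_links src dst F (~: Y) = set0.
  apply/setP => e; rewrite !inE negbK; apply/negbTE/negP => /and3P [eF hs hd].
  by move: hs; rewrite (arc_out (false, e)) // !inE.
have : \sum_(v in Y) netout src dst F v = 1.
  by rewrite (eq_bigr _ (fun v _ => netout_path v)) sumrB !sum_eq_indicator hsY (negbTE htY).
rewrite sum_netout_cut hin cards0 subr0 => /eqP; rewrite -[1]/(1%:Z) eqz_nat => /eqP h1.
by rewrite -h1 subset_leq_card.
Qed.

Lemma augment_flow z : lwalk rsrc rdst s z t -> uniq z -> {subset z <= residual H F} ->
  exists2 G : {set L}, G \subset H & forall v,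
    netout src dst G v = 2%:Z * ((s == v)%:Z - (t == v)%:Z).
Proof.
move=> hz hzu hzR; set Z := [set a in z].
have hZ b e : (b, e) \in Z -> if b then e \in H :\: F else e \in F.
  by rewrite inE => /hzR; rewrite inE.
have hf : fwd Z \subset H :\: F by apply/subsetP => e; rewrite inE => /(hZ true).
have hb : bwd Z \subset F by apply/subsetP => e; rewrite inE => /(hZ false).
exists ((F :\: bwd Z) :|: fwd Z).
  rewrite subUset (subset_trans hf (subsetDl _ _)) andbT.
  by apply: (subset_trans (subsetDl _ _)); apply/subsetP => e; rewrite inE => /hrH.
move=> v; rewrite netout_setU; last first.
  rewrite disjoint_sym disjoint_subset (subset_trans hf) //.
  by apply/subsetP => e /setDP [_ eF]; rewrite inE in_setD (negbTE eF) andbF.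
have := netout_arcs Z v; rewrite (netout_lwalk _ hz hzu) netout_setD // netout_path.
lra.
Qed.

End Residual.

Lemma two_flow_lwalks G s t : s != t ->
  (forall v, netout src dst G v = 2%:Z * ((s == v)%:Z - (t == v)%:Z)) ->
  exists r1 r2, [/\ lwalk src dst s r1 t, lwalk src dst s r2 t,
    {subset r1 <= G}, {subset r2 <= G} & [disjoint r1 & r2]].
Proof.
move=> hst hG; have [r1 [h1 h1u h1G]] := flow_lwalk hst (isT : (0 < 2)%N) hG.
have hsub : [set e in r1] \subset G by apply/subsetP => e; rewrite inE => /h1G.
have [|r2 [h2 _ h2G]] := @flow_lwalk _ _ src dst (G :\: [set e in r1]) s t 1 hst isT.
  by move=> v; rewrite netout_setD // hG (netout_lwalk _ h1 h1u); lra.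
exists r1, r2; split => //.
- by move=> e /h2G /setDP [].
- by rewrite disjoint_sym disjoint_subset; apply/subsetP => e /h2G /setDP [_]; rewrite !inE.
Qed.

(* Augment one path along a path of the residual graph; when there is none, the
   vertices reachable in the residual graph form a cut left by at most one link of H. *)
Theorem menger_two H s t : s != t ->
  (forall Y, s \in Y -> t \notin Y -> (1 < #|out_links src dst H Y|)%N) ->
  exists r1 r2, [/\ lwalk src dst s r1 t, lwalk src dst s r2 t,
    {subset r1 <= H}, {subset r2 <= H} & [disjoint r1 & r2]].
Proof.
move=> hst hcut.
have [|r [hr hru hrH]] := lwalk_of_cuts (H := H) (s := s) (t := t).
  by move=> Y hs ht; rewrite -card_gt0 ltnW ?hcut.
have [hres | /(residual_cut (H := H) hr hru) [Y [hs ht]]] :=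
  boolP (connect (linkrel rsrc rdst (residual H [set e in r])) s t); last first.
  by rewrite leqNgt hcut.
have [z [hz hzu hzR]] := connect_lwalk hres.
have [G hGH hG] := augment_flow hr hru hrH hz hzu hzR.
have [r1 [r2 [h1 h2 h1G h2G hd]]] := two_flow_lwalks hst hG.
by exists r1, r2; split => // e => [/h1G | /h2G]; apply: (subsetP hGH).
Qed.

End Menger.

Lemma setI_cross (T : finType) (A1 A2 B1 B2 Y Z : {set T}) :
  [disjoint A1 & A2] -> [disjoint B1 & B2] -> [disjoint A1 & B1] ->
  Y \subset A2 -> Z \subset B2 -> (A1 :|: Z) :&: (B1 :|: Y) \subset A2 :&: B2.
Proof.
move=> dA dB dAB /subsetP hY /subsetP hZ; apply/subsetP => X /setIP [].
case/setUP => [XA1 | /hZ XB2] /setUP [XB1 | /hY XA2].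
- by rewrite (disjointFr dAB XA1) in XB1.
- by rewrite (disjointFr dA XA1) in XA2.
- by rewrite (disjointFl dB XB2) in XB1.
- exact/setIP.
Qed.

Lemma upath_splice (V : finType) (adj : rel V) x y t t' a v b c d :
  upath adj x t' (a ++ v :: b) -> upath adj y t (c ++ v :: d) ->
  exists2 r, upath adj x t r &
    links_seq (x :: r) \subset links_seq (x :: a) :|: ((last x a, v) |: links_seq (v :: d)).
Proof.
case/upath_split => [[ha _ _] hav _] /upath_split [_ _ [hd htd _]].
have hw : path adj x (a ++ v :: d) by rewrite cat_path ha /= hav.
have [r [hr _ hs]] := walk_shorten hw.
have hl : last x (a ++ v :: d) = t by rewrite last_cat.
by exists r; rewrite -?hl // -links_seq_split.
Qed.

Section Uncross.
Variables (V : finType) (adj : rel V) (x t v1 v2 : V) (a1 b1 a2 b2 : seq V).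
Hypotheses (h1 : upath adj x t (a1 ++ v1 :: b1)) (h2 : upath adj x t (a2 ++ v2 :: b2)).
Let A := links_seq (x :: a1 ++ v1 :: b1).
Let B := links_seq (x :: a2 ++ v2 :: b2).
Let e := (last x a1, v1).
Let f := (last x a2, v2).
Hypotheses (he : e \in A :&: B) (hf : f \in A :&: B) (hef : e != f).
Hypotheses (ha1 : links_seq (x :: a1) :&: (A :&: B) = set0)
  (ha2 : links_seq (x :: a2) :&: (A :&: B) = set0).

(* Swap the tails after e and f: the new paths share only links lying on both old
   tails, which excludes e. *)
Lemma uncross : exists r1 r2, [/\ upath adj x t r1, upath adj x t r2,
  links_seq (x :: r1) :|: links_seq (x :: r2) \subset A :|: B &
  links_seq (x :: r1) :&: links_seq (x :: r2) \subset (A :&: B) :\ e].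
Proof.
set P1 := links_seq (x :: a1); set A2 := links_seq (v1 :: b1).
set P2 := links_seq (x :: a2); set B2 := links_seq (v2 :: b2).
have [[_ _ hu1] [_ _ hu2]] := (h1, h2).
have [eP1 eA2 dA] := uniq_links_seq_split hu1.
have [fP2 fB2 dB] := uniq_links_seq_split hu2.
have hA : A = P1 :|: (e |: A2) by rewrite /A links_seq_split.
have hB : B = P2 :|: (f |: B2) by rewrite /B links_seq_split.
have offK P X : P :&: (A :&: B) = set0 -> X \in A :&: B -> X \notin P.
  by move=> hP hX; apply/negP => XP; move/setP: hP => /(_ X); rewrite in_setI XP hX in_set0.
have heB2 : e \in B2.
  move: (he); rewrite in_setI hB in_setU in_setU1 (negbTE (offK _ _ ha2 he)) (negbTE hef).
  by case/andP.
have hfA2 : f \in A2.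
  move: (hf); rewrite in_setI hA in_setU in_setU1 (negbTE (offK _ _ ha1 hf)) eq_sym (negbTE hef).
  by case/andP.
have [c2 [d2 [eb2 _]]] := links_seq_splitP heB2.
have [c1 [d1 [eb1 _]]] := links_seq_splitP hfA2.
have h2' : upath adj x t ((a2 ++ v2 :: c2) ++ v1 :: d2) by move: h2; rewrite eb2 -cat_cons catA.
have h1' : upath adj x t ((a1 ++ v1 :: c1) ++ v2 :: d1) by move: h1; rewrite eb1 -cat_cons catA.
have [r1 hr1 hs1] := upath_splice h1 h2'.
have [r2 hr2 hs2] := upath_splice h2 h1'.
set Z := links_seq (v1 :: d2) in hs1; set Y := links_seq (v2 :: d1) in hs2.
have hZ : Z \subset B2 by rewrite /B2 eb2 links_seq_split subsetU // subsetU1 ?orbT.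
have hY : Y \subset A2 by rewrite /A2 eb1 links_seq_split subsetU // subsetU1 ?orbT.
have sA1 : e |: P1 \subset A by rewrite hA setUCA setUA subsetUl.
have sB1 : f |: P2 \subset B by rewrite hB setUCA setUA subsetUl.
have sA2 : A2 \subset A by rewrite hA setUCA setUA subsetUr.
have sB2 : B2 \subset B by rewrite hB setUCA setUA subsetUr.
exists r1, r2; split => //.
  have hW1 : P1 :|: (e |: Z) \subset A :|: B.
    by rewrite setUCA setUA setUSS // (subset_trans hZ).
  have hW2 : P2 :|: (f |: Y) \subset A :|: B.
    by rewrite setUCA setUA [A :|: B]setUC setUSS // (subset_trans hY).
  by rewrite subUset (subset_trans hs1 hW1) (subset_trans hs2 hW2).
have d11 : [disjoint e |: P1 & f |: P2].
  rewrite -setI_eq0; apply/set0Pn => -[X /setIP [hX1 hX2]].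
  have XK : X \in A :&: B by rewrite in_setI (subsetP sA1 _ hX1) (subsetP sB1 _ hX2).
  move: hX1 hX2; rewrite !in_setU1 (negbTE (offK _ _ ha1 XK)) (negbTE (offK _ _ ha2 XK)) !orbF.
  by move=> /eqP -> /eqP hef'; move: hef; rewrite hef' eqxx.
apply: subset_trans (setISS hs1 hs2) _; rewrite !(setUCA _ [set _]) !setUA.
apply: subset_trans (setI_cross _ _ d11 hY hZ) _.
- by rewrite disjoint_setU1 eA2.
- by rewrite disjoint_setU1 fB2.
apply/subsetP => X /setIP [XA2 XB2].
rewrite in_setD1 in_setI (subsetP sA2 _ XA2) (subsetP sB2 _ XB2) !andbT.
by apply: contraNneq eA2 => XE; move: XA2; rewrite XE.
Qed.

End Uncross.

Section Detour.
Variables (V : finType) (adj : rel V).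
Implicit Types (x y z t : V) (p q : seq V) (A B U E : {set link V}).

Definition pair_in x t U E A B :=
  [/\ is_stpath adj x t A, is_stpath adj x t B, A :|: B \subset U & A :&: B \subset E].

Lemma setI_split (T : finType) (A B P1 P2 Q1 Q2 : {set T}) :
  A \subset P1 :|: Q1 -> B \subset P2 :|: Q2 -> [disjoint P1 :|: P2 & Q1 :|: Q2] ->
  A :&: B \subset (P1 :&: P2) :|: (Q1 :&: Q2).
Proof.
move=> /subsetP hA /subsetP hB hd; apply/subsetP => X /setIP [/hA hX1 /hB hX2].
have hPQ X' : X' \in P1 :|: P2 -> X' \in Q1 :|: Q2 -> False.
  by move=> h1 h2; move: (disjointFr hd h1); rewrite h2.
move: hX1 hX2; rewrite !in_setU !in_setI.
case/orP => h1 /orP [] h2; rewrite ?h1 ?h2 ?orbT //; exfalso; apply: (hPQ X);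
  by rewrite in_setU ?h1 ?h2 ?orbT.
Qed.

Lemma upath_cat_stpath x y t p q : upath adj x y p -> upath adj y t q ->
  exists2 A, is_stpath adj x t A & A \subset links_seq (x :: p) :|: links_seq (y :: q).
Proof.
move=> [hp <- _] [hq <- _]; have hpq : path adj x (p ++ q) by rewrite cat_path hp.
by have [A hA hAs] := walk_stpath hpq; exists A; rewrite -?links_seq_cat // -last_cat.
Qed.

Lemma upath_suffix y t q z : upath adj y t q -> z \in q ->
  exists a b, [/\ q = a ++ z :: b, upath adj z t b &
                  links_seq (z :: b) \subset links_seq (y :: q)].
Proof.
move=> hq hz; case/splitPr: hz hq => a b hq; exists a, b; split => //.
  by case: (upath_split hq).
exact: links_seq_suffix.
Qed.

Section Segment.
Variables (x y t : V) (p1 p2 q1 q2 : seq V).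
Hypotheses (hp1 : upath adj x y p1) (hp2 : upath adj x y p2).
Hypotheses (hq1 : upath adj y t q1) (hq2 : upath adj y t q2).
Let P1 := links_seq (x :: p1).
Let P2 := links_seq (x :: p2).
Let Q1 := links_seq (y :: q1).
Let Q2 := links_seq (y :: q2).
Let U := (P1 :|: P2) :|: (Q1 :|: Q2).
Let E := (P1 :&: P2) :|: (Q1 :&: Q2).
Hypothesis hPQ : [disjoint P1 :|: P2 & Q1 :|: Q2].

(* Shortcut x :: p1 ++ q1 at a vertex of both p1 and q1: the link of p1 leaving it is
   then used by neither path. *)
Lemma detour_disjoint : [disjoint P1 & P2] -> ~~ uniq (x :: p1 ++ q1) ->
  exists A B, pair_in x t U E A B /\ A :|: B \proper U.
Proof.
move=> hdP hnu; have [[_ hl1 hu1] [_ _ hv1]] := (hp1, hq1).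
move: hv1; rewrite cons_uniq => /andP [yq1 uq1].
have [z zq1 zp1] : exists2 z, z \in q1 & z \in x :: p1.
  move: hnu; rewrite -cat_cons cat_uniq hu1 uq1 andbT /= negbK => /hasP [z h1 h2].
  by exists z.
have hzy : z != y by apply: contraTneq zq1 => ->.
have [q1a [q1b [_ hz hQz]]] := upath_suffix hq1 zq1.
have [pa [pb [ep1 hzl]]] : exists pa pb, p1 = pa ++ pb /\ last x pa = z.
  by case/splitPl: zp1 => pa pb <-; exists pa, pb.
case: pb ep1 => [|h pb] ep1; first by rewrite ep1 cats0 hzl in hl1; rewrite hl1 eqxx in hzy.
have hpa : upath adj x z pa by move: hp1; rewrite ep1 -hzl => /upath_prefix.
have hP1 : P1 = links_seq (x :: pa) :|: ((z, h) |: links_seq (h :: pb)).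
  by rewrite /P1 ep1 links_seq_split hzl.
have := hu1; rewrite ep1 => /uniq_links_seq_split; rewrite hzl => -[gpa _ _].
have hP1U : P1 \subset U by rewrite /U -setUA subsetUl.
have hAU : P1 :|: Q1 \subset U by rewrite /U setUACA subsetUl.
have hBU : P2 :|: Q2 \subset U by rewrite /U setUACA subsetUr.
have gP1 : (z, h) \in P1 by rewrite hP1 !in_setU set11 orbT.
have gQ : (z, h) \notin Q1 :|: Q2 by rewrite (disjointFr hPQ) // in_setU gP1.
have [A hA hAs] := upath_cat_stpath hpa hz.
have [B hB hBs] := upath_cat_stpath hp2 hq2.
have hAPQ : A \subset P1 :|: Q1.
  by apply: subset_trans hAs (setUSS _ hQz); rewrite /P1 ep1 links_seq_prefix.
have hAB : A :|: B \subset U by rewrite subUset (subset_trans hAPQ) ?(subset_trans hBs).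
exists A, B; split; first by split => //; apply: setI_split hAPQ hBs hPQ.
apply/properP; split => //; exists (z, h); first exact: subsetP hP1U _ gP1.
rewrite in_setU negb_or; apply/andP; split.
  apply: contra gQ => /(subsetP hAs); rewrite in_setU (negbTE gpa) /= => gz.
  by rewrite in_setU (subsetP hQz _ gz).
apply: contra gQ => /(subsetP hBs); rewrite in_setU (disjointFr hdP gP1) /= => gQ2.
by rewrite in_setU gQ2 orbT.
Qed.

(* Here x lies on q1.  If it lies on q2 too, both paths start at x and skip (x, y);
   otherwise the link of q1 entering x is used by neither path. *)
Lemma detour_simple : p1 = [:: y] -> p2 = [:: y] -> ~~ uniq (x :: p1 ++ q1) ->
  exists A B, pair_in x t U E A B /\ A :|: B \proper U.
Proof.
move=> e1 e2; have [_ _] := hp1; rewrite e1 /= inE andbT => hxy.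
have [_ _ /= ->] := hq1; rewrite !andbT inE negb_or hxy /= negbK => xq1.
have [q1a [q1b [eq1 hx1 hQx1]]] := upath_suffix hq1 xq1.
have hQU : Q1 :|: Q2 \subset U by rewrite /U subsetUr.
have hP2U : P2 :|: Q2 \subset U by rewrite /U setUACA subsetUr.
have gP1 : (x, y) \in P1 by rewrite /P1 e1 links_seq_cons setU11.
have gQ : (x, y) \notin Q1 :|: Q2 by rewrite (disjointFr hPQ) // in_setU gP1.
have [xq2 | xq2] := boolP (x \in q2).
  have [q2a [q2b [_ hx2 hQx2]]] := upath_suffix hq2 xq2.
  set A := links_seq (x :: q1b); set B := links_seq (x :: q2b).
  have hAB : A :|: B \subset Q1 :|: Q2 by apply: setUSS.
  exists A, B; split; first split.
  - exact: upath_stpath hx1.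
  - exact: upath_stpath hx2.
  - exact: subset_trans hAB hQU.
  - exact: subset_trans (setISS hQx1 hQx2) (subsetUr _ _).
  apply/properP; split; first exact: subset_trans hAB hQU.
  by exists (x, y); [rewrite /U !in_setU gP1 | apply: contra gQ => /(subsetP hAB)].
have [B hB hBs] := upath_cat_stpath hp2 hq2.
set A := links_seq (x :: q1b); set g := (last y q1a, x).
have hAQ : A \subset P1 :|: Q1 by apply: subset_trans hQx1 (subsetUr _ _).
have hAB : A :|: B \subset U.
  by rewrite subUset (subset_trans hAQ) ?(subset_trans hBs) // /U setUACA subsetUl.
have gQ1 : g \in Q1 by rewrite /Q1 eq1 links_seq_split !in_setU set11 orbT.
have [_ _] := hq1; rewrite eq1 => /uniq_links_seq_split [_ gA _].
exists A, B; split; first by split; rewrite ?(setI_split hAQ hBs) //; apply: upath_stpath.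
apply/properP; split => //; exists g; first by rewrite /U !in_setU gQ1 !orbT.
rewrite in_setU negb_or gA /=; apply/negP => /(subsetP hBs); rewrite in_setU => /orP [gP2 | gQ2].
  by move: (disjointFr hPQ (x := g)); rewrite !in_setU gP2 gQ1 orbT => /(_ isT).
by move: (mem_links_seq gQ2); rewrite /= !inE (negbTE xq2) eq_sym (negbTE hxy) andbF.
Qed.

End Segment.

Lemma upath_cat_uniq x y t p q : upath adj x y p -> upath adj y t q -> uniq (x :: p ++ q) ->
  upath adj x t (p ++ q).
Proof. by move=> [hp hl _] [hq hm _] hu; split => //; rewrite ?cat_path ?last_cat hl ?hp. Qed.

Lemma detour x y t p1 p2 q1 q2
    (P1 := links_seq (x :: p1)) (P2 := links_seq (x :: p2))
    (Q1 := links_seq (y :: q1)) (Q2 := links_seq (y :: q2)) :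
  upath adj x y p1 -> upath adj x y p2 -> upath adj y t q1 -> upath adj y t q2 ->
  [disjoint P1 :|: P2 & Q1 :|: Q2] -> [disjoint P1 & P2] \/ p1 = [:: y] /\ p2 = [:: y] ->
  (upath adj x t (p1 ++ q1) /\ upath adj x t (p2 ++ q2)) \/
  exists A B, pair_in x t ((P1 :|: P2) :|: (Q1 :|: Q2)) ((P1 :&: P2) :|: (Q1 :&: Q2)) A B /\
              A :|: B \proper (P1 :|: P2) :|: (Q1 :|: Q2).
Proof.
move=> hp1 hp2 hq1 hq2 hd hkind.
have [u1 | nu1] := boolP (uniq (x :: p1 ++ q1)); last first.
  by right; case: hkind => [hdP | [e1 e2]]; [apply: detour_disjoint | apply: detour_simple].
have [u2 | nu2] := boolP (uniq (x :: p2 ++ q2)); last first.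
  right; rewrite /P1 /P2 /Q1 /Q2 [_ :|: links_seq (x :: p2)]setUC [_ :|: links_seq (y :: q2)]setUC.
  rewrite [_ :&: links_seq (x :: p2)]setIC [_ :&: links_seq (y :: q2)]setIC.
  case: hkind => [hdP | [e1 e2]]; [apply: detour_disjoint | apply: detour_simple] => //.
  - by rewrite setUC [_ :|: links_seq (y :: q1)]setUC.
  - by rewrite disjoint_sym.
  - by rewrite setUC [_ :|: links_seq (y :: q1)]setUC.
by left; split; [apply: upath_cat_uniq hp1 hq1 u1 | apply: upath_cat_uniq hp2 hq2 u2].
Qed.

Lemma pair_in_cons x y t p1 p2 U E A' B'
    (P1 := links_seq (x :: p1)) (P2 := links_seq (x :: p2)) :
  upath adj x y p1 -> upath adj x y p2 -> pair_in y t U E A' B' ->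
  [disjoint P1 :|: P2 & U] -> A' :|: B' \proper U ->
  exists A B, pair_in x t ((P1 :|: P2) :|: U) ((P1 :&: P2) :|: E) A B /\
              A :|: B \proper (P1 :|: P2) :|: U.
Proof.
move=> hp1 hp2 [/stpathP [a ha ->] /stpathP [b hb ->] hU hE] hd hpr.
have [A hA hAs] := upath_cat_stpath hp1 ha.
have [B hB hBs] := upath_cat_stpath hp2 hb.
have hd' : [disjoint P1 :|: P2 & links_seq (y :: a) :|: links_seq (y :: b)].
  exact: disjointWr hU hd.
have hAB : A :|: B \subset (P1 :|: P2) :|: (links_seq (y :: a) :|: links_seq (y :: b)).
  by rewrite setUACA setUSS.
exists A, B; split; first split => //.
- by apply: subset_trans hAB _; rewrite setUS.
- by apply: subset_trans (setI_split hAs hBs hd') _; rewrite setUS.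
apply: sub_proper_trans hAB _; apply/properP; split; first by rewrite setUS // proper_sub.
have [_ [g gU gAB]] := properP hpr; exists g; first by rewrite in_setU gU orbT.
by rewrite in_setU negb_or gAB (disjointFl hd gU).
Qed.

End Detour.

Section Network.
Variables (R : realType) (V : finType) (adj : rel V) (p w : link V -> R).
Variable D : V -> V -> {set link V} * {set link V}.
Hypothesis w_gt0 : forall e : link V, adj e.1 e.2 -> 0 < w e.
Hypothesis p_gt0_lt1 : forall e : link V, adj e.1 e.2 -> 0 < p e < 1.
Hypothesis D_edspop : EDSPoP_spec adj w D.
Implicit Types (x t : V) (A B P Q : {set link V}).

Definition lcost (e : link V) : R := - ln (1 - p e).
Definition shared_cost A B : R := \sum_(e in A :&: B) lcost e.

Lemma lcost_ge0 e : adj e.1 e.2 -> 0 <= lcost e.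
Proof.
by move=> /p_gt0_lt1 /andP [h0 h1]; rewrite /lcost oppr_ge0; apply: ln_le0; lra.
Qed.

Lemma w_ge0_in A : A \subset links_of adj -> {in A, forall e, 0 <= w e}.
Proof. by move=> /subsetP hA e /hA; rewrite inE => /w_gt0 /ltW. Qed.

Lemma lcost_ge0_in A : A \subset links_of adj -> {in A, forall e, 0 <= lcost e}.
Proof. by move=> /subsetP hA e /hA; rewrite inE => /lcost_ge0. Qed.

Lemma stpath_links x t A : is_stpath adj x t A -> A \subset links_of adj.
Proof.
case/stpathP => r [hr _ _] ->; apply/subsetP => e /(links_seq_adj hr).
by rewrite inE.
Qed.

Definition tcovers x t A B := exists ls,
  [/\ twalk adj x ls t, tW w D ls <= WCO w A B & tC p ls <= shared_cost A B].

Lemma tcovers_disjoint x t A B : is_stpath adj x t A -> is_stpath adj x t B ->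
  [disjoint A & B] -> tcovers x t A B.
Proof.
move=> hA hB /disjoint_setI0 hAB.
have hxt : dpair_exists adj x t by exists A, B.
have [_ _ _ hmin] := D_edspop hxt.
exists [:: inr (x, t)]; split => //.
- by rewrite /tW big_seq1 /WCO big_setU_disj ?hmin // -setI_eq0 hAB.
- by rewrite /tC big_seq1 /shared_cost hAB big_set0.
Qed.

Lemma tcovers_mono x t A B A' B' : A :|: B \subset links_of adj ->
  A' :|: B' \subset A :|: B -> A' :&: B' \subset A :&: B ->
  tcovers x t A' B' -> tcovers x t A B.
Proof.
move=> hAB hU hI [ls [h1 h2 h3]]; exists ls; split => //.
- by apply: (le_trans h2); apply: ler_sum_subset hU (w_ge0_in hAB).
- apply: (le_trans h3); apply: ler_sum_subset hI (lcost_ge0_in _).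
  by apply: subset_trans hAB; apply: subset_trans (subsetIl _ _) (subsetUl _ _).
Qed.

Lemma tcovers_cons x t e A B P1 P2 :
  is_stpath adj x e.1 P1 -> is_stpath adj x e.1 P2 -> [disjoint P1 & P2] ->
  adj e.1 e.2 -> A :|: B \subset links_of adj ->
  [disjoint P1 :|: P2 & e |: (A :|: B)] -> e \notin A :|: B ->
  tcovers e.2 t A B -> tcovers x t (P1 :|: (e |: A)) (P2 :|: (e |: B)).
Proof.
move=> hP1 hP2 hP he hAB hd heAB [ls [h1 h2 h3]].
have hxu : dpair_exists adj x e.1 by exists P1, P2; rewrite disjoint_setI0.
have [_ _ _ hmin] := D_edspop hxu.
exists [:: inr (x, e.1), inl e & ls]; split => //.
- rewrite /tW !big_cons -/(tW w D ls) /WCO.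
  have -> : P1 :|: (e |: A) :|: (P2 :|: (e |: B)) = (P1 :|: P2) :|: (e |: (A :|: B)).
    by apply/setP => X; rewrite !inE; do 5 case: (_ \in _) || case: (_ == _).
  rewrite big_setU_disj // big_setU1 //= big_setU_disj //.
  by apply: lerD; [apply: hmin; rewrite ?disjoint_setI0 | rewrite lerD2l].
- rewrite /tC !big_cons -/(tC p ls) /= add0r /shared_cost.
  apply: (le_trans (y := \sum_(X in e |: (A :&: B)) lcost X)).
    by rewrite big_setU1 ?lerD2l //; apply: contra heAB => /setIP [eA _]; rewrite inE eA.
  apply: ler_sum_subset.
    by apply/subsetP => X; rewrite !inE => /orP [-> | /andP [-> ->]]; rewrite !orbT.
  apply: lcost_ge0_in; apply: subIset; apply/orP; left.
  rewrite !subUset (stpath_links hP1) sub1set inE he /=.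
  by apply: subset_trans hAB; apply: subsetUl.
Qed.

Lemma tcovers_split x t a1 a2 v b1 b2
    (A := links_seq (x :: a1 ++ v :: b1)) (B := links_seq (x :: a2 ++ v :: b2)) :
  upath adj x t (a1 ++ v :: b1) -> upath adj x t (a2 ++ v :: b2) -> last x a1 = last x a2 ->
  links_seq (x :: a1) :&: (A :&: B) = set0 -> links_seq (x :: a2) :&: (A :&: B) = set0 ->
  tcovers v t (links_seq (v :: b1)) (links_seq (v :: b2)) -> tcovers x t A B.
Proof.
move=> h1 h2 hu ha1 ha2 hv; set e := (last x a1, v).
set P1 := links_seq (x :: a1); set A2 := links_seq (v :: b1).
set P2 := links_seq (x :: a2); set B2 := links_seq (v :: b2).
have [[hp1 he hb1] [hp2 _ hb2]] := (upath_split h1, upath_split h2).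
have [[_ _ hu1] [_ _ hu2]] := (h1, h2).
have [eP1 eA2 dA] := uniq_links_seq_split hu1.
have [eP2 eB2 dB] := uniq_links_seq_split hu2; rewrite -hu -/e in eP2 eB2.
have hA : A = P1 :|: (e |: A2) by rewrite /A links_seq_split.
have hB : B = P2 :|: (e |: B2) by rewrite /B links_seq_split -hu.
have offK P Q : P :&: (A :&: B) = set0 -> P :&: Q \subset A :&: B -> [disjoint P & Q].
  by move=> hP hPQ; rewrite -setI_eq0 -subset0 -hP subsetI subsetIl.
have sP1 : P1 \subset A by rewrite hA subsetUl.
have sP2 : P2 \subset B by rewrite hB subsetUl.
have sA2 : A2 \subset A by rewrite hA setUCA setUA subsetUr.
have sB2 : B2 \subset B by rewrite hB setUCA setUA subsetUr.
have d12 : [disjoint P1 & B2] := offK _ _ ha1 (setISS sP1 sB2).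
have d21 : [disjoint P2 & A2] by apply: offK ha2 _; rewrite setIC setISS.
rewrite hA hB; apply: (tcovers_cons (e := e)) hv => //.
- exact: upath_stpath hp1.
- by rewrite /= hu; apply: upath_stpath hp2.
- exact: offK ha1 (setISS sP1 sP2).
- by rewrite subUset (stpath_links (upath_stpath hb1)) (stpath_links (upath_stpath hb2)).
- rewrite disjoint_setUl !(disjoint_sym _ (e |: _)) !disjoint_setU1 !disjoint_setUl.
  by rewrite -!(disjoint_sym P1) -!(disjoint_sym P2) eP1 eP2 dA dB d12 d21.
- by rewrite in_setU negb_or eA2.
Qed.

Lemma upaths_tcovers x t r1 r2 : upath adj x t r1 -> upath adj x t r2 ->
  tcovers x t (links_seq (x :: r1)) (links_seq (x :: r2)).
Proof.
have [n] := ubnP #|links_seq (x :: r1) :&: links_seq (x :: r2)|.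
elim: n x r1 r2 => // n IH x r1 r2 hn h1 h2.
set A := links_seq (x :: r1); set B := links_seq (x :: r2); set K := A :&: B in hn *.
have [hK0 | hK] := eqVneq K set0.
  by apply: tcovers_disjoint (upath_stpath h1) (upath_stpath h2) _; rewrite -setI_eq0; apply/eqP.
have [a1 [v1 [b1 [er1 he ha1]]]] : exists a v b, [/\ r1 = a ++ v :: b, (last x a, v) \in K &
    links_seq (x :: a) :&: K = set0] by apply: links_seq_first; rewrite /K setIA setIid.
have [a2 [v2 [b2 [er2 hf ha2]]]] : exists a v b, [/\ r2 = a ++ v :: b, (last x a, v) \in K &
    links_seq (x :: a) :&: K = set0] by apply: links_seq_first; rewrite /K setICA setIid.
have ltK (S : {set link V}) : S \subset K :\ (last x a1, v1) -> (#|S| < n)%N.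
  move=> hS; apply: leq_ltn_trans (subset_leq_card hS) _.
  by move: hn; rewrite (cardsD1 (last x a1, v1) K) he add1n ltnS.
move: h1 h2 ha1 ha2 he hf ltK; rewrite /K /A /B {}er1 {}er2 {K A B hn hK}.
move=> h1 h2 ha1 ha2 he hf ltK.
have [[_ _ hb1] [_ _ hb2]] := (upath_split h1, upath_split h2).
have [ef | nef] := eqVneq (last x a1, v1) (last x a2, v2).
  case: ef => hu ev; subst v2.
  have [[_ _ hu1] _] := (h1, h2); have [_ eb1 _] := uniq_links_seq_split hu1.
  apply: tcovers_split h1 h2 hu ha1 ha2 (IH _ _ _ (ltK _ _) hb1 hb2).
  apply/subsetP => X /setIP [X1 X2]; rewrite in_setD1 in_setI.
  rewrite (subsetP (links_seq_suffix _ _ _ _) _ X1) (subsetP (links_seq_suffix _ _ _ _) _ X2).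
  by rewrite !andbT; apply: contraNneq eb1 => <-.
have [r1' [r2' [h1' h2' hU hI]]] := uncross h1 h2 he hf nef ha1 ha2.
apply: tcovers_mono hU (subset_trans hI (subsetDl _ _)) (IH _ _ _ (ltK _ hI) h1' h2').
by rewrite subUset (stpath_links (upath_stpath h1)) (stpath_links (upath_stpath h2)).
Qed.

Lemma tweight_ge0 l : tvalid adj l -> 0 <= tweight w D l.
Proof.
case: l => [e /w_gt0 /ltW // | [u v] /= huv].
by have [/stpath_links h1 /stpath_links h2 _ _] := D_edspop huv; rewrite addr_ge0 ?sumr_ge0 // => e;
  [apply: (w_ge0_in h1) | apply: (w_ge0_in h2)].
Qed.

Lemma tcost_ge0 l : tvalid adj l -> 0 <= tcost p l.
Proof. by case: l => [e /lcost_ge0 | //]. Qed.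

Lemma twalk_valid x ls t : twalk adj x ls t -> {in ls, forall l, tvalid adj l}.
Proof.
elim: ls x => [|l ls IH] x //= [hl _ /IH hls] l'.
by rewrite inE => /orP [/eqP -> // | /hls].
Qed.

Lemma twalk_suffix x ls1 l ls2 t :
  twalk adj x (ls1 ++ l :: ls2) t -> twalk adj (tdst l) ls2 t.
Proof. by elim: ls1 x => [|l1 ls1 IH] x /= [_ _ //]; apply: IH. Qed.

Lemma tW_ge0 ls : {in ls, forall l, tvalid adj l} -> 0 <= tW w D ls.
Proof. by move=> hv; rewrite /tW big_seq sumr_ge0 // => l /hv /tweight_ge0. Qed.

Lemma tC_ge0 ls : {in ls, forall l, tvalid adj l} -> 0 <= tC p ls.
Proof. by move=> hv; rewrite /tC big_seq sumr_ge0 // => l /hv /tcost_ge0. Qed.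

Lemma twalk_shorten x ls t : twalk adj x ls t ->
  exists ls', [/\ tpath adj x t ls', {subset map (@tdst V) ls' <= map (@tdst V) ls},
                  tW w D ls' <= tW w D ls & tC p ls' <= tC p ls].
Proof.
have [n] := ubnP (size ls); elim: n x ls => // n IH x ls hn hls.
have [xls | xnls] := boolP (x \in map (@tdst V) ls).
  case/mapP: xls hn hls => l; case/splitPr => ls1 ls2 -> hn hls.
  have hv := twalk_valid hls.
  have hls2 := twalk_suffix hls.
  have [|ls' [h1 h2 h3 h4]] := IH (tdst l) ls2 _ hls2.
    by move: hn; rewrite size_cat /= addnS ltnS => /(leq_ltn_trans (leq_addl _ _)).
  have hv1 : {in ls1 ++ [:: l], forall l, tvalid adj l}.
    by move=> l' hl'; apply: hv; rewrite -cat1s catA mem_cat hl'.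
  exists ls'; split => //.
  - by move=> y /h2 hy; rewrite map_cat mem_cat /= inE hy !orbT.
  - by rewrite -cat1s catA /tW big_cat /= -/(tW w D _) ler_wpDl ?tW_ge0.
  - by rewrite -cat1s catA /tC big_cat /= -/(tC p _) ler_wpDl ?tC_ge0.
case: ls hn hls xnls => [|l ls] hn; first by exists [::]; split.
case=> hl hsrc hls xnls.
have [ls' [[h1 h1u] h2 h3 h4]] := IH (tdst l) ls hn hls.
exists (l :: ls'); split => //.
- split => //; rewrite cons_uniq h1u andbT.
  by apply: contra xnls; rewrite !in_cons => /orP [-> // | /h2 ->]; rewrite orbT.
- by move=> y; rewrite /= !in_cons => /orP [-> // | /h2 ->]; rewrite orbT.
- by rewrite /tW !big_cons lerD2l.
- by rewrite /tC !big_cons lerD2l.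
Qed.

Lemma stpaths_tpath s t A B : is_stpath adj s t A -> is_stpath adj s t B ->
  exists ls, [/\ tpath adj s t ls, tW w D ls <= WCO w A B & tC p ls <= shared_cost A B].
Proof.
case/stpathP => r1 h1 ->; case/stpathP => r2 h2 ->.
have [ls [hls hW hC]] := upaths_tcovers h1 h2.
have [ls' [h' _ hW' hC']] := twalk_shorten hls.
by exists ls'; split => //; [apply: le_trans hW | apply: le_trans hC].
Qed.

Definition seg_links l := part1 D l :|: part2 D l.
Definition tlinks ls := (build D ls).1 :|: (build D ls).2.
Definition tshared ls := \bigcup_(l <- ls) (part1 D l :&: part2 D l).
Fixpoint seg_disjoint ls : bool :=
  if ls is l :: ls' then [disjoint seg_links l & tlinks ls'] && seg_disjoint ls' else true.

Lemma build_cons l ls :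
  build D (l :: ls) = (part1 D l :|: (build D ls).1, part2 D l :|: (build D ls).2).
Proof. by rewrite /build !big_cons. Qed.

Lemma tlinks_nil : tlinks [::] = set0.
Proof. by rewrite /tlinks /build !big_nil setU0. Qed.

Lemma tlinks_cons l ls : tlinks (l :: ls) = seg_links l :|: tlinks ls.
Proof. by rewrite /tlinks /seg_links build_cons setUACA. Qed.

Lemma tshared_cons l ls : tshared (l :: ls) = (part1 D l :&: part2 D l) :|: tshared ls.
Proof. by rewrite /tshared big_cons. Qed.

Lemma tshared_sub ls : tshared ls \subset tlinks ls.
Proof.
elim: ls => [|l ls IH]; first by rewrite /tshared big_nil sub0set.
by rewrite tshared_cons tlinks_cons setUSS // /seg_links subIset ?subsetUl.
Qed.

Lemma seg_upaths l : tvalid adj l -> tsrc l != tdst l ->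
  exists r1 r2, [/\ upath adj (tsrc l) (tdst l) r1, upath adj (tsrc l) (tdst l) r2,
    part1 D l = links_seq (tsrc l :: r1), part2 D l = links_seq (tsrc l :: r2) &
    [disjoint part1 D l & part2 D l] \/ r1 = [:: tdst l] /\ r2 = [:: tdst l]].
Proof.
case: l => [[u v] | [u v]] /= hl huv.
  have hs : upath adj u v [:: v] by split; rewrite //= ?hl // inE huv.
  by exists [:: v], [:: v]; rewrite links_seq_cons links_seq1 setU0; split; try right.
have [/stpathP [r1 h1 ->] /stpathP [r2 h2 ->] hd _] := D_edspop hl.
by exists r1, r2; split => //; left; rewrite -setI_eq0 hd.
Qed.

Lemma seg_links_sub l : tvalid adj l -> seg_links l \subset links_of adj.
Proof.
case: l => [[u v] | [u v]] /= hl; first by rewrite /seg_links setUid sub1set inE.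
by have [h1 h2 _ _] := D_edspop hl; rewrite subUset !(stpath_links h1, stpath_links h2).
Qed.

Lemma tweight_seg l : tvalid adj l -> tweight w D l = wt w (seg_links l).
Proof.
case: l => [e | [u v]] /= hl; first by rewrite /seg_links /= setUid /wt big_set1.
by have [_ _ hd _] := D_edspop hl; rewrite /wt big_setU_disj // -setI_eq0 hd.
Qed.

Lemma tcost_seg l : tvalid adj l -> tcost p l = shared_cost (part1 D l) (part2 D l).
Proof.
case: l => [e | [u v]] /= hl; first by rewrite /shared_cost setIid big_set1.
by have [_ _ hd _] := D_edspop hl; rewrite /shared_cost hd big_set0.
Qed.

Lemma tlinks_sub x ls t : twalk adj x ls t -> tlinks ls \subset links_of adj.
Proof.
elim: ls x => [|l ls IH] x; first by rewrite tlinks_nil sub0set.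
by case=> hl _ /IH hls; rewrite tlinks_cons subUset seg_links_sub.
Qed.

Lemma wt_tlinks_le x ls t : twalk adj x ls t -> wt w (tlinks ls) <= tW w D ls.
Proof.
elim: ls x => [|l ls IH] x; first by rewrite tlinks_nil /wt big_set0 /tW big_nil.
case=> hl _ hls; rewrite tlinks_cons /tW big_cons -/(tW w D ls) tweight_seg //.
apply: le_trans (ler_sum_setU _ (w_ge0_in (tlinks_sub hls))) _.
by rewrite lerD2l (IH _ hls).
Qed.

Lemma wt_tlinks_lt x ls t : twalk adj x ls t -> ~~ seg_disjoint ls ->
  wt w (tlinks ls) < tW w D ls.
Proof.
elim: ls x => [|l ls IH] x //; case=> hl _ hls /=.
rewrite tlinks_cons /tW big_cons -/(tW w D ls) tweight_seg //.
have [hd /(IH _ hls) hlt | ] := boolP [disjoint seg_links l & tlinks ls].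
  apply: le_lt_trans (ler_sum_setU _ (w_ge0_in (tlinks_sub hls))) _.
  by rewrite ltrD2l.
rewrite -setI_eq0 => /set0Pn [g hg] _.
apply: lt_le_trans (ltr_sum_setU _ hg) _; last by rewrite lerD2l (wt_tlinks_le hls).
move=> e; rewrite in_setU => /orP [/(subsetP (seg_links_sub hl)) | /(subsetP (tlinks_sub hls))].
  by rewrite inE => /w_gt0.
by rewrite inE => /w_gt0.
Qed.

Lemma tshared_cost_le x ls t : twalk adj x ls t -> \sum_(e in tshared ls) lcost e <= tC p ls.
Proof.
elim: ls x => [|l ls IH] x; first by rewrite /tshared big_nil big_set0 /tC big_nil.
case=> hl _ hls; rewrite tshared_cons /tC big_cons -/(tC p ls) tcost_seg //.
apply: le_trans (ler_sum_setU _ _) _.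
  exact: lcost_ge0_in (subset_trans (tshared_sub ls) (tlinks_sub hls)).
by rewrite lerD2l (IH _ hls).
Qed.

Lemma build_shared ls : seg_disjoint ls -> (build D ls).1 :&: (build D ls).2 \subset tshared ls.
Proof.
elim: ls => [|l ls IH]; first by rewrite /build !big_nil setI0 sub0set.
case/andP=> hd /IH hls; rewrite build_cons tshared_cons /=.
apply/subsetP => X /setIP [/setUP h1 /setUP h2]; rewrite in_setU.
have hdX (Y Z : {set link V}) :
    X \in Y -> X \in Z -> Y \subset seg_links l -> Z \subset tlinks ls -> False.
  move=> XY XZ /subsetP hY /subsetP hZ.
  by move: (disjointFr hd (hY _ XY)); rewrite (hZ _ XZ).
case: h1 h2 => [X1 | X1] [X2 | X2].
- by rewrite in_setI X1 X2.
- by case: (hdX _ _ X1 X2 (subsetUl _ _) (subsetUr _ _)).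
- by case: (hdX _ _ X2 X1 (subsetUr _ _) (subsetUl _ _)).
- by rewrite (subsetP hls) ?orbT // in_setI X1 X2.
Qed.

Lemma twalk_cross x ls t (X : {set V}) : twalk adj x ls t -> x \in X -> t \notin X ->
  exists2 l, l \in ls & [/\ tvalid adj l, tsrc l \in X & tdst l \notin X].
Proof.
elim: ls x => [|l ls IH] x /=; first by move=> -> ->.
case=> hl hs hls hx ht; have [hd | hd] := boolP (tdst l \in X).
  by have [l' hl' hl'X] := IH _ hls hd ht; exists l' => //; rewrite inE hl' orbT.
by exists l; rewrite ?mem_head // hs.
Qed.

Lemma seg_tlinks ls l : l \in ls ->
  seg_links l \subset tlinks ls /\ part1 D l :&: part2 D l \subset tshared ls.
Proof.
elim: ls => [|l' ls IH] //; rewrite inE tlinks_cons tshared_cons.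
case/orP => [/eqP -> | /IH [h1 h2]]; first by rewrite !subsetUl.
by split; [apply: subset_trans h1 _ | apply: subset_trans h2 _]; apply: subsetUr.
Qed.

(* The links of [ls], with a second copy (tagged [false]) of each link that both
   paths of a segment use, i.e. of each simple link. *)
Definition copies ls : {set link V * bool} :=
  [set c | (c.1 \in tlinks ls) && (c.2 || (c.1 \in tshared ls))].
Definition copy_src (c : link V * bool) := c.1.1.
Definition copy_dst (c : link V * bool) := c.1.2.

Lemma copies_cut x ls t (X : {set V}) : twalk adj x ls t -> x \in X -> t \notin X ->
  (1 < #|out_links copy_src copy_dst (copies ls) X|)%N.
Proof.
move=> hls hx ht; have [l hl [hv hs hd]] := twalk_cross hls hx ht.
have [hU hE] := seg_tlinks hl.
have hout g b : g \in seg_links l -> b || (g \in tshared ls) -> g.1 \in X -> g.2 \notin X ->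
    (g, b) \in out_links copy_src copy_dst (copies ls) X.
  move=> hg hb g1 g2; rewrite [_ \in out_links _ _ _ _]inE [_ \in copies _]inE /=.
  by rewrite (subsetP hU _ hg) hb /copy_src /copy_dst g1 g2.
apply/card_gt1P; case: l hl hv hs hd hU hE hout => [e | [u v]] hl /= hv hs hd hU hE hout.
  have he : e \in seg_links (inl e) by rewrite /seg_links setUid set11.
  have heE : e \in tshared ls by rewrite (subsetP hE) // setIid set11.
  by exists (e, true), (e, false); rewrite !hout ?heE // xpair_eqE andbF.
have [/stpathP [r1 [_ hl1 _] e1] /stpathP [r2 [_ hl2 _] e2] hdis _] := D_edspop hv.
have [|g1 hg1 /andP [g1s g1d]] := links_seq_cross (r := r1) hs; first by rewrite hl1.
have [|g2 hg2 /andP [g2s g2d]] := links_seq_cross (r := r2) hs; first by rewrite hl2.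
rewrite -e1 in hg1; rewrite -e2 in hg2.
exists (g1, true), (g2, true); rewrite !hout ?inE ?hg1 ?hg2 ?orbT //=.
split => //; rewrite xpair_eqE andbT; apply/eqP => g12.
by move/setP: hdis => /(_ g1); rewrite in_setI hg1 g12 hg2 in_set0.
Qed.

Lemma tlinks_pair x ls t : twalk adj x ls t ->
  exists A B, pair_in adj x t (tlinks ls) (tshared ls) A B.
Proof.
move=> hls; have [<- | hxt] := eqVneq x t.
  have h0 : is_stpath adj x x set0.
    by rewrite -(links_seq1 x); apply: (upath_stpath (r := [::])).
  by exists set0, set0; split; rewrite ?setU0 ?setI0 ?sub0set.
have [r1 [r2 [h1 h2 s1 s2 hdis]]] := menger_two hxt (fun X => copies_cut (X := X) hls).
have proj r : lwalk copy_src copy_dst x r t -> {subset r <= copies ls} ->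
    exists2 A, is_stpath adj x t A & A \subset [set c.1 | c in r].
  move=> hr hsub; have [c /hsub|hp hl hlinks] := lwalk_path (adj := adj) hr.
    by rewrite inE => /andP [/(subsetP (tlinks_sub hls))]; rewrite inE.
  have [A hA hAs] := walk_stpath hp; rewrite hl in hA; exists A => //.
  apply: subset_trans hAs (subset_trans hlinks _).
  by apply/subsetP => g /imsetP [c hc ->]; apply/imsetP; exists c; rewrite // -surjective_pairing.
have [A hA sA] := proj r1 h1 s1; have [B hB sB] := proj r2 h2 s2.
have hc (r : seq (link V * bool)) c : {subset r <= copies ls} -> c \in r ->
    c.1 \in tlinks ls /\ (c.2 || (c.1 \in tshared ls)).
  by move=> hr /hr; rewrite inE => /andP.
exists A, B; split => //.
  apply/subsetP => g /setUP [/(subsetP sA) | /(subsetP sB)] /imsetP [c hcr ->].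
    by have [] := hc _ _ s1 hcr.
  by have [] := hc _ _ s2 hcr.
apply/subsetP => g /setIP [/(subsetP sA) /imsetP [[g1 b1] hc1 ->]].
move=> /(subsetP sB) /imsetP [[g2 b2] hc2 /= e12]; move: hc2; rewrite -e12 => hc2.
have [[_ /= h1'] [_ /= h2']] := (hc _ _ s1 hc1, hc _ _ s2 hc2).
have hb : b1 != b2 by apply: contraTneq hc2 => <-; rewrite (disjointFr hdis hc1).
by case: b1 b2 {hc1 hc2} h1' h2' hb => [] [].
Qed.

Lemma seg_disjoint_build x ls t : tpath adj x t ls -> seg_disjoint ls ->
  (exists r1 r2, [/\ upath adj x t r1, upath adj x t r2,
     (build D ls).1 = links_seq (x :: r1) & (build D ls).2 = links_seq (x :: r2)])
  \/ exists A B, pair_in adj x t (tlinks ls) (tshared ls) A B /\ A :|: B \proper tlinks ls.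
Proof.
elim: ls x => [|l ls IH] x.
  case=> /= -> _ _; left; exists [::], [::].
  by rewrite /build !big_nil links_seq1; split.
case=> [[hl hs hls] hu0] /andP [hd hnd].
move: hu0; rewrite [uniq _]/= inE negb_or => /andP [/andP [hxy _] hu].
have [|p1 [p2 [hp1 hp2 e1 e2 hkind]]] := seg_upaths hl; first by rewrite hs.
rewrite hs in hp1 hp2 e1 e2; rewrite /seg_links e1 e2 in hd.
have hdec : tlinks (l :: ls) = (links_seq (x :: p1) :|: links_seq (x :: p2)) :|: tlinks ls.
  by rewrite tlinks_cons /seg_links e1 e2.
have hdecE : tshared (l :: ls) = (links_seq (x :: p1) :&: links_seq (x :: p2)) :|: tshared ls.
  by rewrite tshared_cons e1 e2.
have [[q1 [q2 [hq1 hq2 f1 f2]]] | [A' [B' [hAB' hpr]]]] := IH _ (conj hls hu) hnd; last first.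
  by right; rewrite hdec hdecE; apply: pair_in_cons hp1 hp2 hAB' hd hpr.
have hQ : tlinks ls = links_seq (tdst l :: q1) :|: links_seq (tdst l :: q2).
  by rewrite /tlinks f1 f2.
rewrite hQ in hd hdec; rewrite e1 e2 in hkind.
have [[h1 h2] | [A [B [[hA hB hABU hABE] hpr]]]] := detour hp1 hp2 hq1 hq2 hd hkind.
  left; exists (p1 ++ q1), (p2 ++ q2); have [[_ hl1 _] [_ hl2 _]] := (hp1, hp2).
  by rewrite build_cons f1 f2 e1 e2 !links_seq_cat hl1 hl2; split.
right; exists A, B; rewrite hdec; split => //; split => //.
apply: subset_trans hABE _; rewrite hdecE setUS // -f1 -f2.
exact: build_shared.
Qed.

Lemma tpath_pair s t ls : tpath adj s t ls ->
  exists A B, pair_in adj s t (tlinks ls) (tshared ls) A B /\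
              ((A, B) = build D ls \/ wt w (A :|: B) < tW w D ls).
Proof.
move=> htp; have [hls _] := htp.
have w_gt0_in : {in tlinks ls, forall e, 0 < w e}.
  by move=> e /(subsetP (tlinks_sub hls)); rewrite inE => /w_gt0.
have [hnd | hnd] := boolP (seg_disjoint ls); last first.
  have [A [B hAB]] := tlinks_pair hls; exists A, B; split => //; right.
  have [_ _ hU _] := hAB; apply: le_lt_trans (wt_tlinks_lt hls hnd).
  exact: ler_sum_subset hU (w_ge0_in (tlinks_sub hls)).
case: (seg_disjoint_build htp hnd) => [[r1 [r2 [h1 h2 e1 e2]]] | [A [B [hAB hpr]]]].
  exists (build D ls).1, (build D ls).2; split; last by left; case: (build D ls).
  split; [rewrite e1; exact: upath_stpath h1 | rewrite e2; exact: upath_stpath h2 | by [] |].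
  exact: build_shared.
exists A, B; split => //; right; apply: lt_le_trans (wt_tlinks_le hls).
exact: ltr_sum_proper hpr w_gt0_in.
Qed.

Lemma surv_ln A B : A :&: B \subset links_of adj ->
  0 < surv p A B /\ ln (surv p A B) = - shared_cost A B.
Proof.
move=> /subsetP hK; rewrite /surv /shared_cost /lcost sumrN opprK.
apply: (@big_ind2 R R (fun x y : R => 0 < x /\ ln x = y)); first by rewrite ln1.
  by move=> x1 x2 y1 y2 [h1 <-] [h2 <-]; rewrite mulr_gt0 // lnM.
by move=> e /hK; rewrite inE => /p_gt0_lt1 /andP [_ h1]; rewrite subr_gt0.
Qed.

Lemma feasible_connP s t S A B : 0 < S -> is_stpath adj s t A -> is_stpath adj s t B ->
  feasible_conn adj p s t S A B <-> shared_cost A B <= - ln S.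
Proof.
move=> hS hA hB; have [hpos hln] := surv_ln (subset_trans (subsetIl A B) (stpath_links hA)).
rewrite /feasible_conn -ler_ln ?posrE // hln lerNr; tauto.
Qed.

Lemma feasible_rsp s t S A B : 0 < S -> feasible_conn adj p s t S A B ->
  exists ls, RSP_feasible adj p s t S ls /\ tW w D ls <= WCO w A B.
Proof.
move=> hS [hA [hB hf]]; have [ls [htp hW hC]] := stpaths_tpath hA hB.
exists ls; split => //; split => //; apply: le_trans hC _.
by apply/(feasible_connP hS hA hB).
Qed.

Lemma rsp_feasible_conn s t S ls : 0 < S -> RSP_feasible adj p s t S ls ->
  exists A B, feasible_conn adj p s t S A B /\ ((A, B) = build D ls \/ WCO w A B < tW w D ls).
Proof.
move=> hS [htp hC]; have [A [B [[hA hB _ hE] hcase]]] := tpath_pair htp.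
exists A, B; split => //; apply/(feasible_connP hS hA hB).
apply: le_trans hC; apply: le_trans (tshared_cost_le htp.1).
apply: ler_sum_subset hE (lcost_ge0_in _).
exact: subset_trans (tshared_sub ls) (tlinks_sub htp.1).
Qed.

End Network.

Theorem theorem3 (R : realType) (V : finType) (adj : rel V)
    (p w : link V -> R) (pmax : R) (s t : V) (S : R) :
  pmax < 1 ->
  (forall e : link V, adj e.1 e.2 -> 0 < p e <= pmax) ->
  (forall e : link V, adj e.1 e.2 -> 0 < w e) ->
  (1 - pmax) ^+ nlinks adj <= S <= 1 ->
  forall D : V -> V -> {set link V} * {set link V},
  EDSPoP_spec adj w D ->
  ((exists A B, feasible_conn adj p s t S A B) ->
     (exists ls, RSP_feasible adj p s t S ls) /\
     (forall ls, RSP_optimal adj p w D s t S ls ->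
        feasible_conn adj p s t S (build D ls).1 (build D ls).2 /\
        (forall A B, feasible_conn adj p s t S A B ->
           WCO w (build D ls).1 (build D ls).2 <= WCO w A B)))
  /\
  (~ (exists A B, feasible_conn adj p s t S A B) ->
     ~ (exists ls, RSP_feasible adj p s t S ls)).
Proof.
move=> hpmax hp hw /andP [hSmin _] D hD.
have p01 e : adj e.1 e.2 -> 0 < p e < 1.
  by case/hp/andP => h0 h1; rewrite h0 (le_lt_trans h1 hpmax).
have hS : 0 < S by apply: lt_le_trans hSmin; rewrite exprn_gt0 // subr_gt0.
split; last first.
  move=> hno [ls /(rsp_feasible_conn hw p01 hD hS) [A [B [hf _]]]].
  by apply: hno; exists A, B.
move=> [A [B /(feasible_rsp hw p01 hD hS) [ls [hls _]]]]; split; first by exists ls.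
move=> {A B hls} ls [hls hopt].
have [A [B [hf [hAB | hlt]]]] := rsp_feasible_conn hw p01 hD hS hls; last first.
  have [ls' [hls' hW]] := feasible_rsp hw p01 hD hS hf.
  by move: (lt_le_trans (le_lt_trans hW hlt) (hopt _ hls')); rewrite ltxx.
rewrite -hAB; split => // A' B' /(feasible_rsp hw p01 hD hS) [ls' [hls' hW]].
apply: le_trans hW; apply: le_trans (hopt _ hls').
have -> : WCO w (A, B).1 (A, B).2 = wt w (tlinks D ls) by rewrite /tlinks -hAB.
case: hls => -[htw _] _; exact: (wt_tlinks_le hw hD htw).
Qed.
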